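(* Let $G$ be a $k$-uniform hypergraph with vertex set $\{1,\dots,n\}$ and edges $e_1,\dots,e_\ell$ (each a $k$-subset of $\{1,\dots,n\}$). Then $G$ is not $2$-DP-colorable if and only if there exist $(n-k)$-faces $a^1,\dots,a^\ell$ of $Q_2^n$ such that, for each $j$, the set of non-asterisk positions of $a^j$ is $e_j$, and $\bigcup_{j=1}^{\ell}(a^j\cup\overline{a^j})=Q_2^n$, where $\overline{a^j}$ denotes the face antipodal to $a^j$.
   Context: $Q_2^n=\{0,1\}^n$. An $m$-face of $Q_2^n$ is given by a tuple $a=(a_1,\dots,a_n)\in\{0,1,*\}^n$ with exactly $m$ entries equal to $*$; it denotes the set $\{x\in Q_2^n : x_i=a_i \text{ whenever } a_i\in\{0,1\}\}$. The face antipodal to $a$ is $\overline{a}$ with $\overline{a}_i=*$ where $a_i=*$ and $\overline{a}_i=1-a_i$ otherwise. For a hypergraph $G$, a collection $\Phi=(\varphi_e)_{e\in E(G)}$ consists of maps $\varphi_e:e\to\{0,1\}$; a $2$-coloring $f:V(G)\to\{0,1\}$ avoids $\Phi$ if for every edge $e$, $f|_e\neq\varphi_e$ and $f|_e\neq\varphi_e\oplus 1$ (the complementary map). $G$ is $2$-DP-colorable if for every such collection $\Phi$ there is a $2$-coloring avoiding $\Phi$. *)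

From mathcomp Require Import all_boot.
Set Implicit Arguments. Unset Strict Implicit. Unset Printing Implicit Defensive.

(* Q_2^n = {0,1}^n, represented as {ffun 'I_n -> bool} (false = 0, true = 1). *)
Definition cube (n : nat) := {ffun 'I_n -> bool}.

(* A face of Q_2^n: a tuple in {0,1,*}^n; None stands for *. *)
Definition face (n : nat) := {ffun 'I_n -> option bool}.

Definition dim_face n (a : face n) : nat := #|[set i | a i == None]|.

Definition fixed_pos n (a : face n) : {set 'I_n} := [set i | a i != None].

Definition face_pts n (a : face n) : {set cube n} :=
  [set x : cube n | [forall i, if a i is Some b then x i == b else true]].

Definition antipodal n (a : face n) : face n :=
  [ffun i => omap negb (a i)].

Definition k_uniform n l (E : 'I_l -> {set 'I_n}) (k : nat) : Prop :=
  forall j, #|E j| = k.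

(* A collection Phi: for each edge e, a map phi_e : e -> {0,1}, represented
   by a function 'I_n -> bool of which only the values on e matter. *)
Definition avoids n l (E : 'I_l -> {set 'I_n}) (Phi : 'I_l -> 'I_n -> bool)
  (f : 'I_n -> bool) : Prop :=
  forall j, ~ (forall v, v \in E j -> f v = Phi j v) /\
            ~ (forall v, v \in E j -> f v = ~~ Phi j v).

Definition DP2_colorable n l (E : 'I_l -> {set 'I_n}) : Prop :=
  forall Phi : 'I_l -> 'I_n -> bool, exists f : 'I_n -> bool, avoids E Phi f.

From mathcomp Require Import all_boot.
From Stdlib Require Import Classical.

Set Implicit Arguments.
Unset Strict Implicit.
Unset Printing Implicit Defensive.

(* A collection Phi and a family of faces a^j with fixed positions e_j are the
   same data: a^j fixes the coordinates of e_j to the values of phi_e_j.  A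
   colouring f violates Phi on e_j exactly when f, read as a point of the cube,
   lies in a^j or in its antipodal face (which fixes e_j to the complement of
   phi_e_j).  Hence some Phi admits no avoiding colouring iff some such family
   of faces, together with their antipodes, covers the whole cube. *)

Section Faces.

Variable n : nat.

Definition restrict_face (e : {set 'I_n}) (phi : 'I_n -> bool) : face n :=
  [ffun i => if i \in e then Some (phi i) else None].

Lemma fixed_pos_restrict_face e phi : fixed_pos (restrict_face e phi) = e.
Proof. by apply/setP => i; rewrite !inE ffunE; case: (i \in e). Qed.

Lemma dim_face_restrict_face e phi : dim_face (restrict_face e phi) = n - #|e|.
Proof.
rewrite /dim_face; have -> : [set i | restrict_face e phi i == None] = ~: e.
  by apply/setP => i; rewrite !inE ffunE; case: (i \in e).
by rewrite cardsCs setCK card_ord.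
Qed.

Lemma restrict_face_fixed_pos (a : face n) :
  restrict_face (fixed_pos a) (fun i => a i == Some true) = a.
Proof. by apply/ffunP => i; rewrite !(inE, ffunE); case: (a i) => [[]|]. Qed.

Lemma antipodal_restrict_face e phi :
  antipodal (restrict_face e phi) = restrict_face e (negb \o phi).
Proof. by apply/ffunP => i; rewrite !ffunE; case: (i \in e). Qed.

Lemma mem_face_pts_restrict_face (x : cube n) e phi :
  (x \in face_pts (restrict_face e phi)) = [forall (i | i \in e), x i == phi i].
Proof.
by rewrite inE; apply: eq_forallb => i; rewrite ffunE; case: (i \in e).
Qed.

Definition face_cover l (a : 'I_l -> face n) : {set cube n} :=
  \bigcup_(j < l) (face_pts (a j) :|: face_pts (antipodal (a j))).

End Faces.

Section Colorings.

Variables (n l : nat) (E : 'I_l -> {set 'I_n}).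

Definition constraint_faces (Phi : 'I_l -> 'I_n -> bool) (j : 'I_l) : face n :=
  restrict_face (E j) (Phi j).

Lemma avoids_notin_face_cover Phi (f : 'I_n -> bool) :
  avoids E Phi f <-> finfun f \notin face_cover (constraint_faces Phi).
Proof.
have agreeP (phi : 'I_n -> bool) j :
    reflect (forall v, v \in E j -> f v = phi v)
            [forall (v | v \in E j), finfun f v == phi v].
  apply: (iffP forall_inP) => agree v /agree; rewrite ffunE.
    by move/eqP.
  by move=> ->.
split=> [avoid_f | /bigcupP notin_f j].
- apply/bigcupP => -[j _]; rewrite inE /constraint_faces antipodal_restrict_face.
  rewrite !mem_face_pts_restrict_face; have [avoid1 avoid2] := avoid_f j.
  by case/orP => /agreeP.
- split=> agree; apply: notin_f; exists j => //;
    rewrite inE /constraint_faces antipodal_restrict_face;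
    rewrite !mem_face_pts_restrict_face; apply/orP; [left | right];
    exact/agreeP.
Qed.

Lemma DP2_colorable_face_cover :
  DP2_colorable E <->
  forall Phi, face_cover (constraint_faces Phi) != [set: cube n].
Proof.
split=> [colorable Phi | uncovered Phi].
- have [f /avoids_notin_face_cover notin_f] := colorable Phi.
  by apply: contraNneq notin_f => ->; rewrite inE.
- have /subsetPn[x _ notin_x] :
      ~~ ([set: cube n] \subset face_cover (constraint_faces Phi)).
    by rewrite subTset.
  by exists x; apply/avoids_notin_face_cover; rewrite ffunK.
Qed.

Lemma not_DP2_colorable_face_cover :
  ~ DP2_colorable E <->
  exists Phi, face_cover (constraint_faces Phi) = [set: cube n].
Proof.
rewrite DP2_colorable_face_cover; split=> [not_all | [Phi covered] all_uncovered].
- have [Phi not_uncovered] := not_all_ex_not _ _ not_all.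
  by exists Phi; apply/eqP/negPn/negP.
- by move: (all_uncovered Phi); rewrite covered eqxx.
Qed.

End Colorings.

Theorem proposition7 (n k l : nat) (E : 'I_l -> {set 'I_n}) :
  injective E -> k_uniform E k ->
  (~ DP2_colorable E <->
   exists a : 'I_l -> face n,
     (forall j, dim_face (a j) = n - k) /\
     (forall j, fixed_pos (a j) = E j) /\
     \bigcup_(j < l) (face_pts (a j) :|: face_pts (antipodal (a j))) = [set: cube n]).
Proof.
move=> _ uniformE; rewrite not_DP2_colorable_face_cover.
split=> [[Phi covered] | [a [_ [fixed_a covered]]]].
- exists (constraint_faces E Phi); split; [|split] => // j.
  + by rewrite dim_face_restrict_face uniformE.
  + exact: fixed_pos_restrict_face.
- exists (fun j i => a j i == Some true).
  rewrite -covered /face_cover /constraint_faces; apply: eq_bigr => j _.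
  by rewrite -fixed_a restrict_face_fixed_pos.
Qed.
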